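(* Let $H\in M_{M\times N}(\mathbb T)$ be a partial Hadamard matrix with rows $R_1,\ldots,R_M$ such that the projections $P_{ij}=\mathrm{Proj}(R_i/R_j)$ pairwise commute. Let $\mathcal A\subset M_N(\mathbb C)$ be the unital algebra generated by the $P_{ij}$, and write $\mathcal A=C(S)$ with $S\subset\widetilde S_M$, where each character $\chi$ of $\mathcal A$ corresponds to the partial permutation $\sigma$ with $\sigma(j)=i\iff\chi(P_{ij})=1$. Then the quantum semigroup $G$ associated to $H$ is the subsemigroup $\langle S\rangle\subset\widetilde S_M$ generated by $S$, i.e. the bialgebra image of $\pi_H$ is $C(\langle S\rangle)$, with $u_{ij}$ mapped to the function $\sigma\mapsto1$ if $\sigma(j)=i$ and $0$ otherwise.
   Context: A partial Hadamard matrix is $H\in M_{M\times N}(\mathbb T)$ with pairwise orthogonal rows; $R_i/R_j$ is entrywise division; $\mathrm{Proj}(\xi)$ is the orthogonal projection onto $\mathbb C\xi$. $\widetilde S_M$ is the semigroup of partial permutations (bijections $X\to Y$, $X,Y\subset\{1,\ldots,M\}$) with product $(\sigma\tau)(j)=\sigma(\tau(j))$ when defined. $\widetilde{\mathcal A}_s(M)$ is the unital $*$-algebra generated by the entries $u_{ij}$ of the universal $M\times M$ submagic matrix (entries are projections, pairwise orthogonal on rows and on columns), with comultiplication $\Delta(u_{ij})=\sum_k u_{ik}\otimes u_{kj}$; $\pi_H:\widetilde{\mathcal A}_s(M)\to M_N(\mathbb C)$ is given by $u_{ij}\mapsto P_{ij}$. The bialgebra image of $\pi_H$ (whose algebra is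 written $C(G)$) is the minimal factorization $\pi_H=\rho\circ q$ with $q$ a surjective comultiplication-preserving unital $*$-homomorphism onto a unital $*$-algebra with comultiplication, minimal in the sense that every other such factorization maps uniquely onto it compatibly with the quotient maps. $C(\langle S\rangle)$ carries the comultiplication $\Delta(f)(\sigma,\tau)=f(\sigma\tau)$. *)

From mathcomp Require Import all_boot all_algebra reals.
From mathcomp.real_closed Require Import complex.
Set Implicit Arguments. Unset Strict Implicit. Unset Printing Implicit Defensive.
Import GRing.Theory Num.Theory.
Local Open Scope ring_scope.

Section Defs.
Variables (R : realType) (M N : nat).
Local Notation C := R[i].

Definition partial_hadamard (H : 'M[C]_(M, N)) : Prop :=
  (forall i a, `|H i a| = 1) /\
  (forall i k : 'I_M, i != k -> \sum_a H i a * (H k a)^* = 0).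

Definition Proj (xi : 'cV[C]_N) : 'M[C]_N :=
  (\sum_a `|xi a ord0| ^+ 2)^-1 *: (xi *m (map_mx Num.conj xi)^T).

Definition row_ratio (H : 'M[C]_(M, N)) (i j : 'I_M) : 'cV[C]_N :=
  \col_a (H i a / H j a).

Definition Pij (H : 'M[C]_(M, N)) (i j : 'I_M) : 'M[C]_N := Proj (row_ratio H i j).

(** Free unital *-algebra on the (self-adjoint) generators u_ij:
    words in the letters (i,j), elements as formal finite linear combinations. *)
Definition word := seq ('I_M * 'I_M).
Definition fsum := seq (C * word).

Definition fcoef (a : fsum) (w : word) : C := \sum_(x <- a | x.2 == w) x.1.
Definition fsEq (a b : fsum) : Prop := forall w, fcoef a w = fcoef b w.

Definition fscale (c : C) (a : fsum) : fsum := [seq (c * x.1, x.2) | x <- a].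
Definition lmulW (w : word) (a : fsum) : fsum := [seq (x.1, w ++ x.2) | x <- a].
Definition rmulW (w : word) (a : fsum) : fsum := [seq (x.1, x.2 ++ w) | x <- a].
Definition fstar (a : fsum) : fsum := [seq ((x.1)^*, rev x.2) | x <- a].

(** Tensor square of the free algebra: combinations of pairs of words. *)
Definition tsum := seq (C * (word * word)).
Definition tcoef (t : tsum) (p : word * word) : C := \sum_(x <- t | x.2 == p) x.1.
Definition tEq (s t : tsum) : Prop := forall p, tcoef s p = tcoef t p.

Definition tensL (w : word) (b : fsum) : tsum := [seq (x.1, (w, x.2)) | x <- b].
Definition tensR (b : fsum) (w : word) : tsum := [seq (x.1, (x.2, w)) | x <- b].

(** Comultiplication Delta(u_ij) = sum_k u_ik (x) u_kj, extended multiplicatively. *)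
Fixpoint allseqs (n : nat) : seq (seq 'I_M) :=
  if n is n'.+1 then [seq k :: s | k <- enum 'I_M, s <- allseqs n'] else [:: [::]].

Definition deltaW (w : word) : tsum :=
  [seq (1, ([seq (x.1.1, x.2) | x <- zip w ks], [seq (x.2, x.1.2) | x <- zip w ks]))
  | ks <- allseqs (size w)].

Definition deltaF (a : fsum) : tsum :=
  flatten [seq [seq (x.1 * y.1, y.2) | y <- deltaW x.2] | x <- a].

Definition piW (H : 'M[C]_(M, N)) (w : word) : 'M[C]_N :=
  foldr (fun x acc => Pij H x.1 x.2 *m acc) 1%:M w.
Definition piF (H : 'M[C]_(M, N)) (a : fsum) : 'M[C]_N :=
  \sum_(x <- a) x.1 *: piW H x.2.

Definition inAlgP (H : 'M[C]_(M, N)) (X : 'M[C]_N) : Prop := exists a, X = piF H a.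

Definition character (H : 'M[C]_(M, N)) (chi : 'M[C]_N -> C) : Prop :=
  chi 1%:M = 1 /\
  (forall X Y, inAlgP H X -> inAlgP H Y -> chi (X + Y) = chi X + chi Y) /\
  (forall c X, inAlgP H X -> chi (c *: X) = c * chi X) /\
  (forall X Y, inAlgP H X -> inAlgP H Y -> chi (X *m Y) = chi X * chi Y).

Definition pmapM := {ffun 'I_M -> option 'I_M}.
Definition is_pperm (s : pmapM) : Prop :=
  forall j k i, s j = Some i -> s k = Some i -> j = k.
Definition ppcomp (s t : pmapM) : pmapM := [ffun j => obind s (t j)].

Definition charS (H : 'M[C]_(M, N)) (s : pmapM) : Prop :=
  is_pperm s /\ exists chi, character H chi /\
    (forall i j, s j = Some i <-> chi (Pij H i j) = 1).

Definition gen_sg (S : pmapM -> Prop) (s : pmapM) : Prop :=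
  exists (s0 : pmapM) (l : seq pmapM),
    S s0 /\ (forall t, t \in l -> S t) /\ s = foldl ppcomp s0 l.

(** Phi : u_ij |-> (sigma |-> [sigma(j) = i]), into functions on partial maps
    (only their values on <S> matter: C(<S>)). *)
Definition phiW (w : word) (s : pmapM) : C :=
  \prod_(x <- w) (if s x.2 == Some x.1 then 1 else 0).
Definition phiF (a : fsum) (s : pmapM) : C := \sum_(x <- a) x.1 * phiW x.2 s.
Definition phi2 (t : tsum) (s u : pmapM) : C :=
  \sum_(x <- t) x.1 * phiW x.2.1 s * phiW x.2.2 u.

(** Kernels of factorizations of pi_H through tilde A_s(M) by surjective
    comultiplication-preserving unital *-morphisms, seen in the free algebra:
    *-ideals containing the submagic relations, which are coideals
    (Delta(I) in I (x) F + F (x) I = ker (q (x) q)) and lie in ker pi_H. *)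
Definition factor_kernel (H : 'M[C]_(M, N)) (I : fsum -> Prop) : Prop :=
  (forall a b, fsEq a b -> I a -> I b) /\
  I [::] /\
  (forall a b, I a -> I b -> I (a ++ b)) /\
  (forall c a, I a -> I (fscale c a)) /\
  (forall w a, I a -> I (lmulW w a) /\ I (rmulW w a)) /\
  (forall a, I a -> I (fstar a)) /\
  (forall i j : 'I_M, I [:: (1, [:: (i, j); (i, j)]); (-1, [:: (i, j)])]) /\
  (forall i j k : 'I_M, j != k -> I [:: (1, [:: (i, j); (i, k)])]) /\
  (forall i j k : 'I_M, i != k -> I [:: (1, [:: (i, j); (k, j)])]) /\
  (forall a, I a -> exists (L : seq (word * fsum)) (Rr : seq (fsum * word)),
      (forall p, p \in L -> I p.2) /\ (forall p, p \in Rr -> I p.1) /\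
      tEq (deltaF a) (flatten [seq tensL p.1 p.2 | p <- L] ++
                      flatten [seq tensR p.1 p.2 | p <- Rr])) /\
  (forall a, I a -> piF H a = 0).

End Defs.

(* Since the P_ij commute, the algebra they generate is spanned by its
   minimal projections, the nonzero atoms E_e = prod_p (P_p or 1 - P_p)
   indexed by boolean assignments e of the generators; each one carries the
   character P_p |-> e(p), and orthogonality of the rows of H makes the corresponding
   partial map sigma_e (sigma_e(j) = i iff e(i,j)) a partial permutation.
   Every element pi_H(a) acts on E_e by the scalar Phi(a)(sigma_e), and the
   atoms sum to 1, so pi_H(a) vanishes whenever Phi(a) vanishes on S.
   Conversely a character chi of the algebra with its partial permutation s
   satisfies chi(pi_H(a)) = Phi(a)(s), so any factorization kernel I lies in
   the kernel of evaluation at S; it then lies in the kernel of evaluation at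
   <S> by induction on the length of a product, because Delta(I) is in
   I (x) F + F (x) I and (Phi (x) Phi)(Delta a)(s, t) = Phi(a)(s t). *)
From mathcomp Require Import all_boot all_algebra reals.
From mathcomp.real_closed Require Import complex.
Set Implicit Arguments. Unset Strict Implicit. Unset Printing Implicit Defensive.
Import GRing.Theory Num.Theory.
Local Open Scope ring_scope.

Section PhiMorphism.
Variables (R : realType) (M : nat).
Local Notation C := R[i].
Implicit Types (s t u : pmapM M) (w : word M) (a b : fsum R M).

Lemma phiW_nil s : phiW R [::] s = 1.
Proof. by rewrite /phiW big_nil. Qed.

Lemma phiW_cons x w s :
  phiW R (x :: w) s = (if s x.2 == Some x.1 then 1 else 0) * phiW R w s.
Proof. by rewrite /phiW big_cons. Qed.

Lemma phiW_cat w1 w2 s : phiW R (w1 ++ w2) s = phiW R w1 s * phiW R w2 s.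
Proof. by rewrite /phiW big_cat. Qed.

Lemma phiW_rev w s : phiW R (rev w) s = phiW R w s.
Proof. by rewrite /phiW; apply: perm_big; rewrite perm_rev. Qed.

Lemma conj_phiW w s : (phiW R w s)^* = phiW R w s.
Proof.
rewrite /phiW rmorph_prod; apply: eq_bigr => x _.
by case: eqP; rewrite ?rmorph0 ?rmorph1.
Qed.

Lemma phiF_nil s : phiF [::] s = 0 :> C.
Proof. by rewrite /phiF big_nil. Qed.

Lemma phiF_cons x a s : phiF (x :: a) s = x.1 * phiW R x.2 s + phiF a s.
Proof. by rewrite /phiF big_cons. Qed.

Lemma phiF_unit s : phiF [:: (1 : C, [::])] s = 1.
Proof. by rewrite phiF_cons phiF_nil phiW_nil mulr1 addr0. Qed.

Lemma phiF_cat a b s : phiF (a ++ b) s = phiF a s + phiF b s.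
Proof. by rewrite /phiF big_cat. Qed.

Lemma phiF_flatten (l : seq (fsum R M)) s :
  phiF (flatten l) s = \sum_(b <- l) phiF b s.
Proof.
elim: l => [|b l IH]; first by rewrite big_nil phiF_nil.
by rewrite /= phiF_cat IH big_cons.
Qed.

Lemma phiF_scale c a s : phiF (fscale c a) s = c * phiF a s.
Proof.
rewrite /phiF /fscale big_map mulr_sumr; apply: eq_bigr => x _ /=.
by rewrite mulrA.
Qed.

Lemma phiF_lmul w a s : phiF (lmulW w a) s = phiW R w s * phiF a s.
Proof.
rewrite /phiF /lmulW big_map mulr_sumr; apply: eq_bigr => x _ /=.
by rewrite phiW_cat mulrCA.
Qed.

Lemma phiF_rmul w a s : phiF (rmulW w a) s = phiF a s * phiW R w s.
Proof.
rewrite /phiF /rmulW big_map mulr_suml; apply: eq_bigr => x _ /=.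
by rewrite phiW_cat mulrA.
Qed.

Lemma phiF_star a s : phiF (fstar a) s = (phiF a s)^*.
Proof.
rewrite /phiF /fstar big_map rmorph_sum; apply: eq_bigr => x _ /=.
by rewrite rmorphM phiW_rev; congr (_ * _); exact/esym/conj_phiW.
Qed.

Definition fmul a b : fsum R M :=
  [seq (x.1 * y.1, x.2 ++ y.2) | x <- a, y <- b].

Lemma phiF_fmul a b s : phiF (fmul a b) s = phiF a s * phiF b s.
Proof.
rewrite /phiF /fmul big_allpairs_dep mulr_suml; apply: eq_bigr => x _.
rewrite mulr_sumr; apply: eq_bigr => y _ /=.
by rewrite phiW_cat mulrACA.
Qed.

Lemma phiF_submagic_idem i j s :
  phiF [:: (1 : C, [:: (i, j); (i, j)]); (-1, [:: (i, j)])] s = 0.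
Proof.
rewrite !phiF_cons phiF_nil !phiW_cons phiW_nil /=.
by case: eqP; rewrite ?(mul1r, mulr1, mul0r, addr0, mulN1r, subrr).
Qed.

Lemma phiF_submagic_row i j k s : is_pperm s -> j != k ->
  phiF [:: (1 : C, [:: (i, j); (i, k)])] s = 0.
Proof.
move=> s_pperm jk; rewrite !phiF_cons phiF_nil !phiW_cons phiW_nil /= mul1r mulr1 addr0.
case: eqP => [sj|_]; last by rewrite mul0r.
case: eqP => [sk|_]; last by rewrite mulr0.
by rewrite (s_pperm _ _ _ sj sk) eqxx in jk.
Qed.

Lemma phiF_submagic_col i j k s : i != k ->
  phiF [:: (1 : C, [:: (i, j); (k, j)])] s = 0.
Proof.
move=> ik; rewrite !phiF_cons phiF_nil !phiW_cons phiW_nil /= mul1r mulr1 addr0.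
case: eqP => [sj|_]; last by rewrite mul0r.
case: eqP => [sk|_]; last by rewrite mulr0.
by move: sk; rewrite sj => -[ik']; rewrite ik' eqxx in ik.
Qed.

Lemma ppcomp_pperm s t : is_pperm s -> is_pperm t -> is_pperm (ppcomp s t).
Proof.
move=> s_pperm t_pperm j k i; rewrite /ppcomp !ffunE.
case Ej: (t j) => [j'|] //=; case Ek: (t k) => [k'|] //= sj sk.
by move: Ek; rewrite -(s_pperm _ _ _ sj sk); apply: t_pperm.
Qed.

Lemma gen_sg_pperm (S : pmapM M -> Prop) :
  (forall s, S s -> is_pperm s) -> forall s, gen_sg S s -> is_pperm s.
Proof.
move=> S_pperm _ [s0 [l [S_s0 [S_l ->]]]].
have : is_pperm s0 by apply: S_pperm.
elim: l s0 {S_s0} S_l => [|t l IH] s0 S_l s0_pperm //=.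
apply: IH => [u ul|]; first by apply: S_l; rewrite in_cons ul orbT.
by apply: ppcomp_pperm => //; apply/S_pperm/S_l; rewrite mem_head.
Qed.

Definition coord_indicator t (j : 'I_M) : fsum R M :=
  if t j is Some i then [:: (1, [:: (i, j)])]
  else (1, [::]) :: [seq (-1, [:: (i, j)]) | i <- enum 'I_M].

Definition indicator t : fsum R M :=
  foldr fmul [:: (1, [::])] [seq coord_indicator t j | j <- enum 'I_M].

Lemma phiF_coord_indicator t j s :
  phiF (coord_indicator t j) s = (s j == t j)%:R.
Proof.
rewrite /coord_indicator; case: (t j) => [i|].
  by rewrite phiF_cons phiF_nil phiW_cons phiW_nil mul1r mulr1 addr0; case: eqP.
rewrite phiF_cons phiW_nil mul1r /phiF big_map.
under eq_bigr => i _ do rewrite /= phiW_cons phiW_nil mulr1 mulN1r.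
case: (s j) => [k|] /=; last by rewrite big1 ?addr0 // => *; rewrite oppr0.
rewrite (bigD1_seq k) ?mem_enum ?enum_uniq //= eqxx addNKr big1 // => i ik.
by case: eqP => [[ki]|_]; [rewrite ki eqxx in ik | rewrite oppr0].
Qed.

Lemma phiF_indicator t s : phiF (indicator t) s = (s == t)%:R.
Proof.
have -> : phiF (indicator t) s =
    \prod_(j <- enum 'I_M) phiF (coord_indicator t j) s.
  rewrite /indicator; elim: (enum 'I_M) => [|j r IH] /=.
    by rewrite big_nil phiF_unit.
  by rewrite big_cons phiF_fmul IH.
have [->|s_neq_t] := eqVneq s t.
  by rewrite big1_seq // => j _; rewrite phiF_coord_indicator eqxx.
have [j sj_neq_tj] : exists j, s j != t j.
  by apply/existsP; apply: contraNT s_neq_t => /existsPn h; apply/eqP/ffunP => j; apply/eqP/negbNE.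
rewrite (bigD1_seq j) ?mem_enum ?enum_uniq //= phiF_coord_indicator.
by rewrite (negbTE sj_neq_tj) mul0r.
Qed.

Lemma phiF_surjective (f : pmapM M -> C) : exists a, forall s, phiF a s = f s.
Proof.
exists (flatten [seq fscale (f t) (indicator t) | t <- enum {ffun 'I_M -> option 'I_M}]).
move=> s; rewrite phiF_flatten big_map.
rewrite (bigD1_seq s) ?mem_enum ?enum_uniq //= phiF_scale phiF_indicator eqxx mulr1.
by rewrite big1 ?addr0 // => t /negbTE ts; rewrite phiF_scale phiF_indicator eq_sym ts mulr0.
Qed.

Lemma phi2E (T : tsum R M) s u :
  phi2 T s u = \sum_(x <- T) x.1 * (phiW R x.2.1 s * phiW R x.2.2 u).
Proof. by apply: eq_bigr => x _; rewrite mulrA. Qed.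

(* Summing over the intermediate indices k_1 ... k_n keeps exactly the one
   path j |-> u(j) |-> s(u(j)) through the composite. *)
Lemma phi2_deltaW w s u : phi2 (deltaW R w) s u = phiW R w (ppcomp s u).
Proof.
rewrite phi2E /deltaW big_map.
under eq_bigr => ks _ do rewrite /= mul1r.
elim: w => [|x w IH] /=; first by rewrite big_seq1 !phiW_nil mulr1.
rewrite big_allpairs_dep /=.
under eq_bigr => k _ do under eq_bigr => ks _ do rewrite /= !phiW_cons /= mulrACA.
under eq_bigr => k _ do rewrite -mulr_sumr IH.
rewrite -mulr_suml phiW_cons /ppcomp ffunE; congr (_ * _).
case E: (u x.2) => [k0|] /=; last by rewrite big1 // => k _; rewrite mulr0.
rewrite (bigD1_seq k0) ?mem_enum ?enum_uniq //= eqxx mulr1 big1 ?addr0 // => k kk.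
by rewrite (inj_eq Some_inj) [k0 == k]eq_sym (negbTE kk) mulr0.
Qed.

Lemma phi2_deltaF a s u : phi2 (deltaF a) s u = phiF a (ppcomp s u).
Proof.
rewrite /deltaF phi2E big_flatten big_map /phiF; apply: eq_bigr => x _.
rewrite big_map -phi2_deltaW phi2E mulr_sumr; apply: eq_bigr => y _ /=.
by rewrite -mulrA.
Qed.

Lemma phi2_tcoef (T : tsum R M) r s u : uniq r -> {subset map snd T <= r} ->
  phi2 T s u = \sum_(p <- r) tcoef T p * (phiW R p.1 s * phiW R p.2 u).
Proof.
move=> r_uniq T_r; rewrite phi2E /tcoef.
under [RHS]eq_bigr => p _ do rewrite mulr_suml big_mkcond.
rewrite exchange_big /=; apply: eq_big_seq => x xT.
rewrite (bigD1_seq x.2) ?T_r ?map_f //= eqxx big1 ?addr0 // => p px.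
by rewrite eq_sym (negbTE px).
Qed.

Lemma phi2_tEq (T1 T2 : tsum R M) s u : tEq T1 T2 -> phi2 T1 s u = phi2 T2 s u.
Proof.
move=> T12; pose r := undup (map snd (T1 ++ T2)).
rewrite (@phi2_tcoef T1 r) ?(@phi2_tcoef T2 r) ?undup_uniq //.
- by apply: eq_bigr => p _; rewrite T12.
- by move=> p pT; rewrite mem_undup map_cat mem_cat pT orbT.
- by move=> p pT; rewrite mem_undup map_cat mem_cat pT.
Qed.

Lemma phi2_cat (T1 T2 : tsum R M) s u :
  phi2 (T1 ++ T2) s u = phi2 T1 s u + phi2 T2 s u.
Proof. by rewrite /phi2 big_cat. Qed.

Lemma phi2_flatten (l : seq (tsum R M)) s u :
  phi2 (flatten l) s u = \sum_(T <- l) phi2 T s u.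
Proof. by rewrite /phi2 big_flatten. Qed.

Lemma phi2_tensL w b s u : phi2 (tensL w b) s u = phiW R w s * phiF b u.
Proof.
rewrite /phi2 /tensL big_map mulr_sumr; apply: eq_bigr => x _ /=.
by rewrite mulrAC mulrC.
Qed.

Lemma phi2_tensR b w s u : phi2 (tensR b w) s u = phiF b s * phiW R w u.
Proof. by rewrite /phi2 /tensR big_map mulr_suml. Qed.

End PhiMorphism.

Section Projections.
Variables (R : realType) (N : nat).
Local Notation C := R[i].
Implicit Types xi eta : 'cV[C]_N.

Definition adjcV xi : 'rV[C]_N := (map_mx Num.conj xi)^T.

Lemma adjcV_mul_self xi : adjcV xi *m xi = (\sum_a `|xi a ord0| ^+ 2)%:M.
Proof.
rewrite [LHS]mx11_scalar; congr (_%:M); rewrite !mxE.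
by apply: eq_bigr => a _; rewrite !mxE normCK mulrC.
Qed.

Lemma Proj_mul xi eta :
  Proj xi *m Proj eta =
  ((\sum_a `|xi a ord0| ^+ 2)^-1 * (\sum_a `|eta a ord0| ^+ 2)^-1) *:
    (xi *m (adjcV xi *m eta) *m adjcV eta).
Proof. by rewrite /Proj -scalemxAl -scalemxAr scalerA !mulmxA. Qed.

Lemma Proj_idem xi : Proj xi *m Proj xi = Proj xi.
Proof.
rewrite Proj_mul adjcV_mul_self mul_mx_scalar -scalemxAl scalerA /Proj.
set n := \sum_a _; congr (_ *: _).
have [->|n_neq0] := eqVneq n 0; first by rewrite invr0 !mul0r.
by rewrite mulfVK ?invr_eq0.
Qed.

Lemma Proj_orth xi eta : adjcV xi *m eta = 0 -> Proj xi *m Proj eta = 0.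
Proof. by move=> xi_eta; rewrite Proj_mul xi_eta mulmx0 mul0mx scaler0. Qed.

Lemma invC_norm1 (y : C) : `|y| = 1 -> y^-1 = y^*.
Proof. by move=> y1; rewrite invC_norm y1 expr1n invr1 mul1r. Qed.

Lemma mulC_conj_norm1 (y : C) : `|y| = 1 -> y * y^* = 1.
Proof. by move=> y1; rewrite -normCK y1 expr1n. Qed.

Lemma conj_ratio_mul_same_den (x y z : C) : `|y| = 1 ->
  (x / y)^* * (z / y) = z * x^*.
Proof.
move=> y1; rewrite invC_norm1 // rmorphM /= conjCK.
by rewrite mulrACA mulC_conj_norm1 // mulr1 mulrC.
Qed.

Lemma conj_ratio_mul_same_num (x y z : C) : `|x| = 1 -> `|y| = 1 -> `|z| = 1 ->
  (x / y)^* * (x / z) = y * z^*.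
Proof.
move=> x1 y1 z1; rewrite !invC_norm1 // rmorphM /= conjCK.
by rewrite mulrACA [x^* * x]mulrC mulC_conj_norm1 // mul1r.
Qed.

Variables (M : nat) (H : 'M[C]_(M, N)).
Hypothesis H_hadamard : partial_hadamard H.

Lemma adjcV_mul_row_ratio i j k l :
  adjcV (row_ratio H i j) *m row_ratio H k l =
  (\sum_a (H i a / H j a)^* * (H k a / H l a))%:M.
Proof.
rewrite [LHS]mx11_scalar; congr (_%:M); rewrite !mxE.
by apply: eq_bigr => a _; rewrite !mxE.
Qed.

Lemma Pij_orth_col i j k : i != k -> Pij H i j *m Pij H k j = 0.
Proof.
move=> ik; apply: Proj_orth; rewrite adjcV_mul_row_ratio.
under eq_bigr => a _ do rewrite conj_ratio_mul_same_den ?(H_hadamard.1 j a) //.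
by rewrite (H_hadamard.2 k i) ?raddf0 // eq_sym.
Qed.

Lemma Pij_orth_row i j k : j != k -> Pij H i j *m Pij H i k = 0.
Proof.
move=> jk; apply: Proj_orth; rewrite adjcV_mul_row_ratio.
under eq_bigr => a _ do
  rewrite conj_ratio_mul_same_num ?(H_hadamard.1 j a) ?(H_hadamard.1 i a) ?(H_hadamard.1 k a) //.
by rewrite (H_hadamard.2 j k) ?raddf0.
Qed.

End Projections.

Section Characters.
Variables (R : realType) (M N : nat) (H : 'M[R[i]]_(M, N)).
Local Notation C := R[i].

Lemma piF_nil : piF H [::] = 0.
Proof. by rewrite /piF big_nil. Qed.

Lemma piF_cons x a : piF H (x :: a) = x.1 *: piW H x.2 + piF H a.
Proof. by rewrite /piF big_cons. Qed.

Lemma inAlgP_piF a : inAlgP H (piF H a).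
Proof. by exists a. Qed.

Lemma inAlgP_scale_piW c w : inAlgP H (c *: piW H w).
Proof. by exists [:: (c, w)]; rewrite piF_cons piF_nil addr0. Qed.

Lemma inAlgP_piW w : inAlgP H (piW H w).
Proof. by rewrite -[piW H w]scale1r; apply: inAlgP_scale_piW. Qed.

Lemma character0 chi : character H chi -> chi 0 = 0.
Proof.
case=> _ [_ [chiZ _]]; rewrite -[0 : 'M[C]_N](scale0r 0) chiZ ?mul0r //.
by exists [::]; rewrite piF_nil.
Qed.

(* chi(P_ij) is idempotent, hence 0 or 1. *)
Lemma character_Pij chi (s : pmapM M) : character H chi ->
  (forall i j, s j = Some i <-> chi (Pij H i j) = 1) ->
  forall i j, chi (Pij H i j) = if s j == Some i then 1 else 0.
Proof.
move=> [_ [_ [_ chiM]]] chi_s i j; set z := chi _.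
have Pij_piW : Pij H i j = piW H [:: (i, j)] by rewrite /= mulmx1.
have zz : z * (z - 1) = 0.
  by rewrite mulrBr mulr1 /z -chiM ?Proj_idem ?subrr // Pij_piW; apply: inAlgP_piW.
case: eqP => [/chi_s //|sj_neq]; apply/eqP; move/eqP: zz.
by rewrite mulf_eq0 subr_eq0 => /orP [//|/eqP /chi_s].
Qed.

Lemma character_piF chi (s : pmapM M) : character H chi ->
  (forall i j, s j = Some i <-> chi (Pij H i j) = 1) ->
  forall a, chi (piF H a) = phiF a s.
Proof.
move=> chi_char chi_s; have [_ [chiD [chiZ chiM]]] := chi_char.
have chi_piW w : chi (piW H w) = phiW R w s.
  elim: w => [|x w IH]; first by rewrite phiW_nil; case: chi_char.
  have Px : Pij H x.1 x.2 = piW H [:: x] by rewrite /= mulmx1.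
  rewrite /= chiM ?IH ?phiW_cons ?(character_Pij chi_char chi_s) ?Px //;
    exact: inAlgP_piW.
elim=> [|x a IH]; first by rewrite piF_nil phiF_nil character0.
rewrite piF_cons chiD ?chiZ ?IH ?chi_piW ?phiF_cons //;
  by [apply: inAlgP_piW | apply: inAlgP_scale_piW | apply: inAlgP_piF].
Qed.

End Characters.

Section Atoms.
Variables (R : realType) (M N : nat) (H : 'M[R[i]]_(M, N)).
Local Notation C := R[i].
Hypothesis H_hadamard : partial_hadamard H.
Hypothesis Pij_comm :
  forall i j k l, Pij H i j *m Pij H k l = Pij H k l *m Pij H i j.

Local Notation gen := ('I_M * 'I_M)%type.
Implicit Types (e : {ffun gen -> bool}) (p q : gen).

Definition Pgen p : 'M[C]_N := Pij H p.1 p.2.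
Definition atom_factor e p := if e p then Pgen p else 1 - Pgen p.
Definition atom e := \prod_p atom_factor e p.

Lemma Pgen_comm p q : Pgen p * Pgen q = Pgen q * Pgen p.
Proof. by rewrite /Pgen -!mulmxE Pij_comm. Qed.

Lemma Pgen_idem p : Pgen p * Pgen p = Pgen p.
Proof. by rewrite /Pgen -mulmxE Proj_idem. Qed.

Lemma Pgen_atom_factor_comm e p q : Pgen q * atom_factor e p = atom_factor e p * Pgen q.
Proof.
rewrite /atom_factor; case: (e p); first exact: Pgen_comm.
by rewrite mulrBr mulrBl mulr1 mul1r Pgen_comm.
Qed.

Lemma Pgen_atom_factor e q : Pgen q * atom_factor e q = if e q then atom_factor e q else 0.
Proof.
rewrite /atom_factor; case: (e q); first exact: Pgen_idem.
by rewrite mulrBr mulr1 Pgen_idem subrr.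
Qed.

Lemma Pgen_atom e q : Pgen q * atom e = if e q then atom e else 0.
Proof.
rewrite /atom; elim: (index_enum _) (mem_index_enum q) => [//|p r IH].
rewrite big_cons; have [<- _|qp] := eqVneq q p.
  by rewrite mulrA Pgen_atom_factor; case: (e q); rewrite ?mul0r.
rewrite in_cons (negbTE qp) /= => qr.
by rewrite mulrA Pgen_atom_factor_comm -mulrA IH //; case: (e q); rewrite ?mulr0.
Qed.

Definition atom_weight e (a : fsum R M) : C :=
  \sum_(x <- a) x.1 * \prod_(y <- x.2) (e y)%:R.

Lemma piW_atom e w : piW H w *m atom e = (\prod_(y <- w) (e y)%:R) *: atom e.
Proof.
elim: w => [|x w IH]; first by rewrite /= mul1mx big_nil scale1r.
rewrite /= -mulmxA IH -scalemxAr big_cons mulmxE -/(Pgen x) Pgen_atom.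
by case: (e x); rewrite ?mul1r ?mul0r ?scaler0 ?scale0r.
Qed.

Lemma piF_atom e a : piF H a *m atom e = atom_weight e a *: atom e.
Proof.
rewrite /piF /atom_weight mulmx_suml scaler_suml; apply: eq_bigr => x _.
by rewrite -scalemxAl piW_atom scalerA.
Qed.

Lemma sum_atom : \sum_e atom e = 1.
Proof.
rewrite /atom /atom_factor.
rewrite -(bigA_distr_bigA (fun p (b : bool) => if b then Pgen p else 1 - Pgen p)) /=.
by rewrite big1 // => p _; rewrite big_bool /= addrC subrK.
Qed.

Lemma atom_col_uniq e i j k : atom e != 0 -> e (i, j) -> e (k, j) -> i = k.
Proof.
move=> atom_neq0 eij ekj; apply/eqP; apply: contraNT atom_neq0 => ik.
move: (Pgen_atom e (i, j)) (Pgen_atom e (k, j)); rewrite eij ekj => P1_atom P2_atom.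
by rewrite -P1_atom -P2_atom mulrA /Pgen -mulmxE Pij_orth_col // mul0mx.
Qed.

Lemma atom_row_uniq e i j k : atom e != 0 -> e (i, j) -> e (i, k) -> j = k.
Proof.
move=> atom_neq0 eij eik; apply/eqP; apply: contraNT atom_neq0 => jk.
move: (Pgen_atom e (i, j)) (Pgen_atom e (i, k)); rewrite eij eik => P1_atom P2_atom.
by rewrite -P1_atom -P2_atom mulrA /Pgen -mulmxE Pij_orth_row // mul0mx.
Qed.

Definition atom_pmap e : pmapM M := [ffun j => [pick i | e (i, j)]].

Lemma atom_pmapP e i j : atom e != 0 -> (atom_pmap e j = Some i <-> e (i, j)).
Proof.
move=> atom_neq0; rewrite /atom_pmap ffunE; case: pickP => [i' ei'j|e_j].
  by split=> [[<-]//|eij]; rewrite (atom_col_uniq atom_neq0 ei'j eij).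
by split=> // eij; rewrite e_j in eij.
Qed.

Lemma atom_weightE e a : atom e != 0 -> atom_weight e a = phiF a (atom_pmap e).
Proof.
move=> atom_neq0; apply: eq_bigr => x _; congr (_ * _); apply: eq_bigr => -[i j] _.
by case: eqP => [/(atom_pmapP _ _ atom_neq0) -> //|]; case: (boolP (e (i, j))) => // eij [];
  apply/(atom_pmapP _ _ atom_neq0).
Qed.

(* The character of a nonzero atom reads off the scalar by which an element
   of the algebra acts on it, at any nonzero entry of the atom. *)
Lemma atom_pmap_charS e : atom e != 0 -> charS H (atom_pmap e).
Proof.
move=> atom_neq0; split.
  move=> j k i /(atom_pmapP _ _ atom_neq0) eij /(atom_pmapP _ _ atom_neq0).
  exact: atom_row_uniq.
have /existsP [a /existsP [b ab_neq0]] : [exists a, [exists b, atom e a b != 0]].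
  apply: contraNT atom_neq0 => /existsPn no_entry; apply/eqP/matrixP => a b.
  by rewrite mxE; move/existsPn: (no_entry a) => /(_ b) /negbNE /eqP.
pose chi (Y : 'M[C]_N) := (Y *m atom e) a b / atom e a b.
have chiE Y l : Y *m atom e = l *: atom e -> chi Y = l.
  by move=> Yl; rewrite /chi Yl mxE mulfK.
have chi_alg X : inAlgP H X -> X *m atom e = chi X *: atom e.
  by move=> [a' ->]; rewrite piF_atom (chiE _ _ (piF_atom e a')).
exists chi; split; first split.
- by apply: chiE; rewrite mul1mx scale1r.
- split; first by move=> X Y _ _; rewrite /chi mulmxDl mxE mulrDl.
  split; first by move=> c X _; rewrite /chi -scalemxAl mxE mulrA.
  move=> X Y /chi_alg X_atom /chi_alg Y_atom; apply: chiE.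
  by rewrite -mulmxA Y_atom -scalemxAr X_atom scalerA mulrC.
- move=> i j; rewrite (atom_pmapP _ _ atom_neq0).
  have -> : chi (Pij H i j) = (e (i, j))%:R.
    by apply: chiE; rewrite mulmxE -/(Pgen (i, j)) Pgen_atom; case: (e _); rewrite ?scale1r ?scale0r.
  by case: (e (i, j)) => //=; split => // /eqP; rewrite eq_sym oner_eq0.
Qed.

Lemma piF_eq0 a : (forall s, charS H s -> phiF a s = 0) -> piF H a = 0.
Proof.
move=> phi_a0; rewrite -[piF H a]mulmx1 idmxE -sum_atom mulmx_sumr big1 // => e _.
have [->|atom_neq0] := eqVneq (atom e) 0; first by rewrite mulmx0.
by rewrite piF_atom atom_weightE // phi_a0 ?scale0r //; apply: atom_pmap_charS.
Qed.

End Atoms.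

Lemma factor_kernel_phiF_eq0 (R : realType) (M N : nat) (H : 'M[R[i]]_(M, N))
    (I : fsum R M -> Prop) :
  factor_kernel H I -> forall a, I a -> forall s, gen_sg (charS H) s -> phiF a s = 0.
Proof.
move=> [_ [_ [_ [_ [_ [_ [_ [_ [_ [I_coideal I_piF]]]]]]]]]].
have I_S a s : charS H s -> I a -> phiF a s = 0.
  move=> [_ [chi [chi_char chi_s]]] Ia.
  by rewrite -(character_piF chi_char chi_s) (I_piF a Ia) (character0 chi_char).
move=> a Ia s [s0 [l [S_s0 [S_l ->]]]].
elim/last_ind: l S_l a Ia => [|l t IH] S_l a Ia; first exact: I_S.
have S_t : charS H t by apply: S_l; rewrite mem_rcons mem_head.
have {}S_l u : u \in l -> charS H u.
  by move=> ul; apply: S_l; rewrite mem_rcons in_cons ul orbT.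
have [L [Rr [L_I [Rr_I deltaE]]]] := I_coideal a Ia.
rewrite foldl_rcons -phi2_deltaF (phi2_tEq _ _ deltaE) phi2_cat !phi2_flatten !big_map.
rewrite !big1_seq ?addr0 // => p /andP [_ pin]; rewrite ?phi2_tensL ?phi2_tensR.
  by rewrite (IH S_l _ (Rr_I _ pin)) mul0r.
by rewrite (I_S _ _ S_t (L_I _ pin)) mulr0.
Qed.

Theorem proposition2p3 (R : realType) (M N : nat) (H : 'M[R[i]]_(M, N)) :
  partial_hadamard H ->
  (forall i j k l, Pij H i j *m Pij H k l = Pij H k l *m Pij H i j) ->
  let S := charS H in
  let GS := gen_sg S in
  (forall s, GS s -> is_pperm s) /\
  (forall s, GS s -> phiF [:: (1 : R[i], [::])] s = 1) /\
  (forall (a b : fsum R M) s, GS s -> phiF (a ++ b) s = phiF a s + phiF b s) /\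
  (forall c (a : fsum R M) s, GS s -> phiF (fscale c a) s = c * phiF a s) /\
  (forall w (a : fsum R M) s, GS s -> phiF (lmulW w a) s = phiW R w s * phiF a s
                      /\ phiF (rmulW w a) s = phiF a s * phiW R w s) /\
  (forall (a : fsum R M) s, GS s -> phiF (fstar a) s = (phiF a s)^*) /\
  (forall (i j : 'I_M) s, GS s ->
     phiF [:: (1 : R[i], [:: (i, j); (i, j)]); (-1, [:: (i, j)])] s = 0) /\
  (forall (i j k : 'I_M) s, j != k -> GS s -> phiF [:: (1 : R[i], [:: (i, j); (i, k)])] s = 0) /\
  (forall (i j k : 'I_M) s, i != k -> GS s -> phiF [:: (1 : R[i], [:: (i, j); (k, j)])] s = 0) /\
  (forall f : pmapM M -> R[i], exists a : fsum R M, forall s, GS s -> phiF a s = f s) /\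
  (forall (a : fsum R M) s t, GS s -> GS t -> phi2 (deltaF a) s t = phiF a (ppcomp s t)) /\
  (forall a : fsum R M, (forall s, GS s -> phiF a s = 0) -> piF H a = 0) /\
  (forall I : fsum R M -> Prop, factor_kernel H I -> forall a, I a -> forall s, GS s -> phiF a s = 0).
Proof.
move=> H_hadamard Pij_comm S GS.
have GS_pperm : forall s, GS s -> is_pperm s by apply: gen_sg_pperm => s [].
split; first exact: GS_pperm.
split; first by move=> s _; apply: phiF_unit.
split; first by move=> a b s _; apply: phiF_cat.
split; first by move=> c a s _; apply: phiF_scale.
split; first by move=> w a s _; rewrite phiF_lmul phiF_rmul.
split; first by move=> a s _; apply: phiF_star.
split; first by move=> i j s _; apply: phiF_submagic_idem.
split; first by move=> i j k s jk /GS_pperm s_pperm; apply: phiF_submagic_row.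
split; first by move=> i j k s ik _; apply: phiF_submagic_col.
split; first by move=> f; have [a phi_a] := phiF_surjective f; exists a => s _.
split; first by move=> a s t _ _; apply: phi2_deltaF.
split; last exact: factor_kernel_phiF_eq0.
move=> a phi_a0; apply: piF_eq0 => // s Ss; apply: phi_a0; exists s, [::].
by split.
Qed.
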